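(* Let $(D,F,B)$ with $D=(\mathcal V,\mathcal A)$ be a restricted instance (i.e. $\mathcal B\subseteq\mathcal F$) with $\mathcal F\neq\emptyset$, and let $\mathrm{TC}(D)=(\mathcal V,\mathcal A')$ be the transitive closure of $D$, equipped with the same functions $F$ and $B$. Then $(D,F,B)$ admits a positive answer to the All-ST problem if and only if $(\mathrm{TC}(D),F,B)$ admits a tree-like solution to the All-ST problem such that the underlying graph of the union of its walks has at most $2|\mathcal F|-1$ vertices.
   Context: A snow team instance is a digraph $D=(\mathcal V,\mathcal A)$ of order $n$ whose underlying simple undirected graph is connected, together with functions $F:\mathcal V\to\{0,1\}$ and $B:\mathcal V\to\mathbb N$. Vertices of $\mathcal F=F^{-1}(1)$ are called facilities (terminals), vertices of $\mathcal B=B^{-1}(\mathbb N^+)$ are called snow team bases, and $\mathbf k_B=\sum_{v\in\mathcal V}B(v)$. The Snow Team problem (ST) asks: do there exist $\mathbf k_B$ directed walks in $D$, exactly $B(v)$ of which start at each vertex $v\in\mathcal V$, such that, letting $H$ be the subgraph of $D$ consisting of the vertices and arcs of these walks, all vertices of $\mathcal F$ lie in one connected component of the underlying undirected graph of $H$? Such a family of walks is called a solution. The All-ST problem is the ST problem restricted to instances satisfying $\mathcal B\subseteq\mathcal F$ (called restricted instances). The transitive closure $\mathrm{TC}(D)$ has vertex set $\mathcal V$ and an arc $(u,v)$, $u\ne v$, whenever $D$ contains a directed path from $u$ to $v$. A solution $\mathcal W$ is tree-like if its walks are strongly arc-distinct (no arc is traversed by two walks or twice by one walk, and no two walks, or one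 walk, traverse both an arc $(u,v)$ and its reverse $(v,u)$), and the underlying undirected graph of the union of the walks is acyclic and contains a Steiner tree for $\mathcal F$ (a subtree containing all vertices of $\mathcal F$). *)

From mathcomp Require Import all_boot.
Set Implicit Arguments. Unset Strict Implicit. Unset Printing Implicit Defensive.

Section SnowTeam.
Variable V : finType.

Definition uconnected (A : rel V) : Prop :=
  forall u v, connect (fun x y => A x y || A y x) u v.

Definition tc (A : rel V) : rel V := fun u v => (u != v) && connect A u v.

(* A walk is given by its start vertex and the sequence of subsequent vertices. *)
Definition walk_ok (A : rel V) (w : V * seq V) : bool := path A w.1 w.2.
Definition wverts (w : V * seq V) : seq V := w.1 :: w.2.
Definition warcs (w : V * seq V) : seq (V * V) := zip (w.1 :: w.2) w.2.

Definition sol_verts (W : seq (V * seq V)) : {set V} :=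
  [set x | has (fun w => x \in wverts w) W].
Definition sol_arcs (W : seq (V * seq V)) : seq (V * V) :=
  flatten (map warcs W).

Definition urel (W : seq (V * seq V)) : rel V :=
  fun x y => ((x, y) \in sol_arcs W) || ((y, x) \in sol_arcs W).

Definition facilities_connected (F : V -> bool) (W : seq (V * seq V)) : Prop :=
  forall f g, F f -> F g -> f \in sol_verts W /\ connect (urel W) f g.

Definition is_solution (A : rel V) (F : V -> bool) (B : V -> nat)
    (W : seq (V * seq V)) : Prop :=
  [/\ all (walk_ok A) W,
      (forall v, count (fun w => w.1 == v) W = B v)
    & facilities_connected F W].

Definition strongly_arc_distinct (W : seq (V * seq V)) : bool :=
  uniq (sol_arcs W) &&
  all (fun e => (e.2, e.1) \notin sol_arcs W) (sol_arcs W).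

Definition acyclic_union (W : seq (V * seq V)) : Prop :=
  forall c : seq V, 3 <= size c -> ~~ ucycleb (urel W) c.

(* Tree-like solution. The Steiner-tree condition (a subtree of the forest
   containing all facilities) is expressed as: all facilities lie in one
   connected component of the (acyclic) union. *)
Definition tree_like (A : rel V) (F : V -> bool) (B : V -> nat)
    (W : seq (V * seq V)) : Prop :=
  [/\ is_solution A F B W, strongly_arc_distinct W,
      acyclic_union W & facilities_connected F W].

End SnowTeam.

From mathcomp Require Import all_boot zify.
Set Implicit Arguments. Unset Strict Implicit. Unset Printing Implicit Defensive.

(* Each walk of a solution is pruned to a subsequence of its vertices, which is
   a walk of TC(D) with the same start.  Adding the vertices of the original
   walks one at a time, the union of the pruned walks is kept a forest in which
   facilities connected in the original union stay connected, and in which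
   every component C satisfies |C| < 2 |F ∩ C|: a newly reached facility
   becomes a leaf, a vertex already present joins two components by an arc,
   and a new non-facility vertex is kept only when it joins two components, by
   extending one pruned walk and inserting it into another (possibly
   subdividing an arc), so that every Steiner vertex pays for a merge.  All
   vertices end in the component of a facility, whence at most 2|F| - 1
   vertices.  Conversely, every arc of TC(D) expands to a path of D, which
   changes neither the starts nor the connections between facilities. *)

(** * Forests whose components are dense in terminals *)

Section Forests.
Variable V : finType.
Implicit Types (e : rel V) (L : seq (V * V)) (S R M : {set V}).

Definition add_edge e (p q : V) : rel V :=
  fun x y => [|| e x y, (x == p) && (y == q) | (x == q) && (y == p)].

Lemma add_edge_sym e p q : symmetric e -> symmetric (add_edge e p q).
Proof.
move=> se x y; rewrite /add_edge se; congr (_ || _).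
by rewrite orbC; congr (_ || _); rewrite andbC.
Qed.

Lemma connect_add_edge e p q x y : symmetric e ->
  connect (add_edge e p q) x y =
  [|| connect e x y, connect e x p && connect e q y | connect e x q && connect e p y].
Proof.
move=> se; have sub : subrel (connect e) (connect (add_edge e p q)).
  by apply: connect_sub => a b eab; apply: connect1; rewrite /add_edge eab.
have epq : add_edge e p q p q && add_edge e p q q p by rewrite /add_edge !eqxx !orbT.
apply/idP/idP; last first.
  case/or3P=> [/sub //|/andP[h1 h2]|/andP[h1 h2]];
    apply: connect_trans (sub _ _ h1) (connect_trans _ (sub _ _ h2));
    by apply: connect1; case/andP: epq.
case/connectP=> s es ->{y}; elim: s x es => [|z s IH] x /=; first by rewrite connect0.
case/andP=> exz /IH {IH}; set y := last z s.
case/or3P: exz => [exz|/andP[/eqP-> /eqP->]|/andP[/eqP-> /eqP->]].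
- have cxz := connect1 exz.
  by case/or3P=> [h|/andP[h1 h2]|/andP[h1 h2]];
    rewrite ?(connect_trans cxz h) ?(connect_trans cxz h1) ?h2 ?orbT.
- by case/or3P=> [h|/andP[h1 h2]|/andP[h1 h2]]; rewrite ?connect0 ?h ?h2 ?orbT.
- by case/or3P=> [h|/andP[h1 h2]|/andP[h1 h2]]; rewrite ?connect0 ?h ?h2 ?orbT.
Qed.

Definition acyclic e := forall c : seq V, 3 <= size c -> ~~ ucycleb e c.

Lemma sub_acyclic e e' : subrel e' e -> acyclic e -> acyclic e'.
Proof.
move=> s ac c hc; apply/negP => /andP[cy u].
by move: (ac c hc); rewrite /ucycleb (sub_cycle s cy) u.
Qed.

Lemma acyclic_add_edge e p q :
  symmetric e -> acyclic e -> ~~ connect e p q -> acyclic (add_edge e p q).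
Proof.
move=> se ac npq c hc; apply/negP => /andP[cy u].
have ep x y : x != p -> y != p -> add_edge e p q x y -> e x y.
  by move=> xp yp; rewrite /add_edge (negbTE xp) (negbTE yp) /= andbF !orbF.
case: (boolP (p \in c)) => pc; last first.
  suff cy' : cycle e c by move: (ac c hc); rewrite /ucycleb cy' u.
  apply: (sub_in_cycle (P := [pred x | x != p])) cy; first by move=> x y /= /ep; apply.
  by apply/allP => x xc /=; apply: contraNneq pc => <-.
case: (rot_to pc) => i r def.
have : uniq (p :: r) by rewrite -def rot_uniq.
have : cycle (add_edge e p q) (p :: r) by rewrite -def rot_cycle.
have : 3 <= size (p :: r) by rewrite -def size_rot.
case: r {def} => [|y r] //= hs; rewrite rcons_path inE negb_or => /andP[epy /andP[pr ezp]].
case/andP=> /andP[py pr'] /andP[yr ur].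
set z := last y r in ezp.
have zr : z \in r by rewrite /z; case: (r) hs => // a r0 _; exact: (mem_last a r0).
have zp : z != p by apply: contraNneq pr' => <-.
have pyr : path e y r.
  apply: (sub_in_path (P := [pred x | x != p])) pr; first by move=> x w /= /ep; apply.
  by rewrite /= eq_sym py; apply/allP => x /= xr; apply: contraNneq pr' => <-.
have cyz : connect e y z by apply/connectP; exists r.
move: epy ezp; rewrite /add_edge !eqxx (eq_sym y p) (negbTE py) (negbTE zp).
rewrite !andbF !andFb !andbT !orbF /=.
case/orP=> [epy|/eqP yq]; case/orP=> [ezp|/eqP zq].
- suff cyc : cycle e [:: p, y & r].
    by move: (ac [:: p, y & r] hs); rewrite /ucycleb cyc /= inE negb_or py pr' yr ur.
  by rewrite /= rcons_path epy pyr ezp.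
- by move: npq; rewrite -zq (connect_trans (connect1 epy) cyz).
- by move: npq; rewrite (sym_connect_sym se) -yq (connect_trans cyz (connect1 ezp)).
- by move: yr; rewrite yq -zq zr.
Qed.

Lemma acyclic_add_edge_disconnected e p q :
  acyclic (add_edge e p q) -> p != q -> ~~ e p q -> ~~ connect e p q.
Proof.
move=> ac pq nepq; apply/negP => /connectP[s ps lst]; subst q.
move: pq nepq ac; case: (shortenP ps) => -[|y [|y' s']] //= ps' u' _.
- by rewrite eqxx.
- by move: ps'; rewrite andbT => ->.
move: ps' u' => /and3P[epy eyy' ps'] u' _ _ ac.
move: (ac [:: p, y, y' & s'] isT); rewrite /ucycleb /= u' andbT rcons_path.
have sub : subrel e (add_edge e p (last y' s')) by move=> x z h; rewrite /add_edge h.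
by rewrite (sub _ _ epy) (sub _ _ eyy') (sub_path sub ps') /add_edge !eqxx !orbT.
Qed.

Definition component e (x : V) : {set V} := [set y | connect e x y].

Definition isolated e (v : V) := forall y, ~~ e v y.

Lemma connect_isolated e v y : isolated e v -> connect e v y -> y = v.
Proof. by move=> iso /connectP[[|z s] /=]; rewrite ?(negbTE (iso _)). Qed.

Lemma component_isolated e v : isolated e v -> component e v = [set v].
Proof.
move=> iso; apply/setP => y; rewrite !inE.
by apply/idP/eqP => [/(connect_isolated iso)|->] //; exact: connect0.
Qed.

Lemma disjoint_components e p q :
  symmetric e -> ~~ connect e p q -> [disjoint component e p & component e q].
Proof.
move=> se npq; rewrite -setI_eq0; apply/eqP/setP => y; rewrite !inE.
apply/negP => /andP[h1 h2]; move: npq; rewrite (connect_trans h1) //.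
by rewrite (sym_connect_sym se).
Qed.

Definition merges e e' M :=
  forall x, component e' x = if x \in M then M else component e x.

Lemma merges_add_edge e p q : symmetric e ->
  merges e (add_edge e p q) (component e p :|: component e q).
Proof.
move=> se x; have cs := sym_connect_sym se.
apply/setP => y; rewrite [in LHS]inE connect_add_edge //.
case: ifP => hx; rewrite !inE in hx *; last first.
  by case/norP: hx => /negbTE px /negbTE qx; rewrite (cs x p) (cs x q) px qx /= orbF.
wlog {hx} hx : p q / connect e p x.
  move=> wl; case/orP: hx => /wl // h; rewrite [RHS]orbC -h.
  by congr (_ || _); rewrite orbC.
have same z : connect e x z = connect e p z.
  by apply/idP/idP => h; apply: connect_trans h; rewrite // cs.
rewrite !same connect0 /=.
by case: (connect e p y); rewrite /= ?andbF ?orbF ?orbT.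
Qed.

Lemma merges_trans e1 e2 e3 M1 M2 :
  merges e1 e2 M1 -> merges e2 e3 M2 -> M1 \subset M2 -> merges e1 e3 M2.
Proof.
move=> m12 m23 /subsetP sM x; rewrite m23 m12.
by case: ifP => // xM2; case: ifP => // /sM; rewrite xM2.
Qed.

Definition component_bound e S R :=
  {in S, forall x, #|component e x| < 2 * #|R :&: component e x|}.

Lemma component_bound_card e S R x :
  component_bound e S R -> x \in S -> S \subset component e x -> #|S| < 2 * #|R|.
Proof.
move=> b xS /subset_leq_card SC; apply: leq_ltn_trans SC (leq_trans (b x xS) _).
by rewrite leq_mul2l subset_leq_card // subsetIl.
Qed.

Lemma component_bound_merges e e' S S' R R' M :
  component_bound e S R -> merges e e' M ->
  {subset S' <= [predU S & M]} -> R \subset R' ->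
  #|M| < 2 * #|R' :&: M| -> component_bound e' S' R'.
Proof.
move=> b m sS sR bM x /sS; rewrite !inE m.
case: ifP => [_ _ //|_]; rewrite orbF => /b /leq_trans; apply.
by rewrite leq_mul2l subset_leq_card // setSI.
Qed.

Lemma cards_disjointU (A B : {set V}) : [disjoint A & B] -> #|A :|: B| = #|A| + #|B|.
Proof. by move=> dAB; apply/eqP; rewrite (leq_card_setU A B).2. Qed.

Lemma cards_components2 e R p q : symmetric e -> ~~ connect e p q ->
  #|component e p :|: component e q| = #|component e p| + #|component e q| /\
  #|R :&: (component e p :|: component e q)| =
    #|R :&: component e p| + #|R :&: component e q|.
Proof.
move=> se /(disjoint_components se) d; rewrite setIUr !cards_disjointU //.
exact: disjointW (subsetIr _ _) (subsetIr _ _) d.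
Qed.

Definition arc_rel L : rel V := fun x y => ((x, y) \in L) || ((y, x) \in L).
Definition simple_arcs L := uniq L && all (fun a => (a.2, a.1) \notin L) L.
Definition arcs_within L S := all (fun a => (a.1 \in S) && (a.2 \in S)) L.

Definition steiner_forest L S R :=
  [/\ simple_arcs L, acyclic (arc_rel L), arcs_within L S
    & component_bound (arc_rel L) S R].

Lemma arc_rel_sym L : symmetric (arc_rel L).
Proof. by move=> x y; rewrite /arc_rel orbC. Qed.

Lemma arc_rel_cons L p q : arc_rel ((p, q) :: L) =2 add_edge (arc_rel L) p q.
Proof.
move=> x y; rewrite /arc_rel /add_edge !inE !xpair_eqE.
by case: ((x, y) \in L); case: ((y, x) \in L); case: (x == p); case: (y == q);
  case: (x == q); case: (y == p).
Qed.

Lemma perm_arc_rel L1 L2 : perm_eq L1 L2 -> arc_rel L1 =2 arc_rel L2.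
Proof. by move=> pL x y; rewrite /arc_rel !(perm_mem pL). Qed.

Lemma component_perm_arcs L1 L2 :
  perm_eq L1 L2 -> component (arc_rel L1) =1 component (arc_rel L2).
Proof. by move=> pL x; apply/setP => y; rewrite !inE (eq_connect (perm_arc_rel pL)). Qed.

Lemma perm_steiner_forest L1 L2 S R :
  perm_eq L1 L2 -> steiner_forest L1 S R -> steiner_forest L2 S R.
Proof.
move=> pL [ok ac win b]; split.
- move: ok; rewrite /simple_arcs (perm_uniq pL) (perm_all _ pL).
  by congr (_ && _); apply: eq_all => a; rewrite (perm_mem pL).
- by apply: sub_acyclic ac => x y; rewrite (perm_arc_rel pL).
- by rewrite /arcs_within -(perm_all _ pL).
- by move=> x /b; rewrite (component_perm_arcs pL).
Qed.

Lemma merges_cons_arc L p q :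
  merges (arc_rel L) (arc_rel ((p, q) :: L))
    (component (arc_rel L) p :|: component (arc_rel L) q).
Proof.
move=> x; rewrite -(merges_add_edge p q (@arc_rel_sym L)).
by apply/setP => y; rewrite !inE (eq_connect (arc_rel_cons L p q)).
Qed.

Lemma eq_component_cons_arc L1 L2 p q :
  component (arc_rel L1) =1 component (arc_rel L2) ->
  component (arc_rel ((p, q) :: L1)) =1 component (arc_rel ((p, q) :: L2)).
Proof.
by move=> eqL x; rewrite (merges_cons_arc L1 p q x) (merges_cons_arc L2 p q x) !eqL.
Qed.

Lemma isolated_arc_rel L S v : arcs_within L S -> v \notin S -> isolated (arc_rel L) v.
Proof.
move=> /allP win vS y; rewrite /arc_rel.
by apply/norP; split; apply: contra vS => /win /andP[].
Qed.

Lemma not_connect_outside L S x v :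
  arcs_within L S -> x \in S -> v \notin S -> ~~ connect (arc_rel L) x v.
Proof.
move=> win xS vS; have iso := isolated_arc_rel win vS.
rewrite (sym_connect_sym (@arc_rel_sym L)).
by apply: contra vS => /(connect_isolated iso) <-.
Qed.

Lemma simple_arcs_irrefl L a : simple_arcs L -> a \in L -> a.1 != a.2.
Proof.
case/andP=> _ /allP rev; case: a => x y aL /=; move: (rev _ aL) => /=.
by apply: contraNneq => xy; rewrite xy in aL *.
Qed.

Lemma simple_arcs_behead L a : simple_arcs (a :: L) -> simple_arcs L.
Proof.
case/andP=> /andP[_ u] /andP[_ /allP rev]; apply/andP; split=> //.
by apply/allP => b /rev; rewrite inE negb_or => /andP[].
Qed.

Lemma forest_add_arc L p q :
  simple_arcs L -> acyclic (arc_rel L) -> ~~ connect (arc_rel L) p q ->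
  simple_arcs ((p, q) :: L) /\ acyclic (arc_rel ((p, q) :: L)).
Proof.
move=> /andP[u rev] ac npq.
have pq : p != q by apply: contraNneq npq => ->; exact: connect0.
have /norP[npqL nqpL] : ~~ arc_rel L p q by apply: contra npq; exact: connect1.
split; last first.
  apply: sub_acyclic (acyclic_add_edge (@arc_rel_sym L) ac npq) => x y.
  by rewrite arc_rel_cons.
rewrite /simple_arcs /= npqL u !inE xpair_eqE (negbTE pq) andbF /= nqpL.
apply/allP => a aL; rewrite inE negb_or (allP rev a aL) andbT.
by apply: contraNneq nqpL; case: a aL => a1 a2 aL [<- <-].
Qed.

Lemma sub_arcs_within L S S' : S \subset S' -> arcs_within L S -> arcs_within L S'.
Proof. by move=> /subsetP sS /allP win; apply/allP => a /win /andP[/sS -> /sS ->]. Qed.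

Lemma steiner_forest_nil R : steiner_forest [::] set0 R.
Proof.
split=> // [c|x]; last by rewrite inE.
by case: c => [|x [|y [|z c]]] //= _; rewrite /ucycleb /= /arc_rel.
Qed.

Lemma steiner_forest_isolated L S R v :
  steiner_forest L S R -> v \notin S -> steiner_forest L (v |: S) (v |: R).
Proof.
case=> ok ac win b vS; split=> //; first exact: sub_arcs_within (subsetUr _ _) win.
apply: (component_bound_merges (M := [set v]) b).
- move=> x; rewrite inE; case: eqP => [->|//].
  exact: component_isolated (isolated_arc_rel win vS).
- by move=> x; rewrite !inE => /orP[->|->]; rewrite ?orbT.
- exact: subsetUr.
- by rewrite (setIidPr _) ?cards1 // sub1set setU11.
Qed.

Lemma steiner_forest_link L S R p q :
  steiner_forest L S R -> p \in S -> q \in S -> ~~ connect (arc_rel L) p q ->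
  steiner_forest ((p, q) :: L) S R.
Proof.
case=> ok ac win b pS qS npq; case: (forest_add_arc ok ac npq) => ok' ac'.
split=> //; first by rewrite /arcs_within /= pS qS.
apply: (component_bound_merges b (merges_cons_arc L p q)).
- by move=> x xS; rewrite inE xS.
- exact: subxx.
have [-> ->] := cards_components2 R (@arc_rel_sym L) npq.
by move: (b p pS) (b q qS); lia.
Qed.

Lemma steiner_forest_fork L S R p q v :
  steiner_forest L S R -> p \in S -> q \in S -> ~~ connect (arc_rel L) p q ->
  v \notin S -> steiner_forest ((p, v) :: (q, v) :: L) (v |: S) R.
Proof.
case=> ok ac win b pS qS npq vS.
have iso := isolated_arc_rel win vS; have se := @arc_rel_sym L.
have nv c : c \in S -> ~~ connect (arc_rel L) c v.
  by move=> cS; exact: not_connect_outside win cS vS.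
set Cp := component (arc_rel L) p; set Cq := component (arc_rel L) q.
have m1 : merges (arc_rel L) (arc_rel ((q, v) :: L)) (Cq :|: [set v]).
  by rewrite -(component_isolated iso); exact: merges_cons_arc.
have pM1 : p \notin Cq :|: [set v].
  by rewrite !inE (sym_connect_sym se) negb_or npq; apply: contraNneq vS => <-.
have m2 : merges (arc_rel L) (arc_rel ((p, v) :: (q, v) :: L)) (Cp :|: Cq :|: [set v]).
  apply: (merges_trans m1); last by rewrite -setUA subsetUr.
  have := merges_cons_arc ((q, v) :: L) p v.
  by rewrite !m1 (negbTE pM1) !inE eqxx orbT -setUA.
have npv : ~~ connect (arc_rel ((q, v) :: L)) p v.
  have : v \notin component (arc_rel ((q, v) :: L)) p by rewrite m1 (negbTE pM1) inE nv.
  by rewrite inE.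
case: (forest_add_arc ok ac (nv q qS)) => ok1 ac1.
case: (forest_add_arc ok1 ac1 npv) => ok2 ac2.
split=> //.
  rewrite /arcs_within /= !in_setU1 eqxx pS qS !orbT /=.
  exact: sub_arcs_within (subsetUr _ _) win.
apply: (component_bound_merges b m2).
- by move=> x; rewrite !inE => /orP[/eqP->|->]; rewrite ?eqxx ?orbT.
- exact: subxx.
have [cM cR] := cards_components2 R se npq.
have vC : v \notin Cp :|: Cq by rewrite !inE negb_or !nv.
have h : #|R :&: Cp| + #|R :&: Cq| <= #|R :&: (Cp :|: Cq :|: [set v])|.
  by rewrite -cR; exact/subset_leq_card/setIS/subsetUl.
have -> : #|Cp :|: Cq :|: [set v]| = (#|Cp| + #|Cq|).+1 by rewrite setUC cardsU1 vC cM.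
have bp : #|Cp| < 2 * #|R :&: Cp| := b p pS.
have bq : #|Cq| < 2 * #|R :&: Cq| := b q qS.
by clear -bp bq h; lia.
Qed.

Lemma forest_cut_arc L a z :
  simple_arcs ((a, z) :: L) -> acyclic (arc_rel ((a, z) :: L)) ->
  [/\ simple_arcs L, acyclic (arc_rel L) & ~~ connect (arc_rel L) a z].
Proof.
move=> ok0 ac0; split; first exact: simple_arcs_behead ok0.
  by apply: sub_acyclic ac0 => x y h; rewrite arc_rel_cons /add_edge h.
apply: acyclic_add_edge_disconnected.
- by apply: sub_acyclic ac0 => x y; rewrite arc_rel_cons.
- exact: simple_arcs_irrefl ok0 (mem_head _ _).
case/andP: ok0 => /andP[azL _] /andP[+ _]; rewrite /arc_rel negb_or azL /=.
by rewrite inE negb_or => /andP[].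
Qed.

Lemma component_subdivide L a z v :
  isolated (arc_rel L) v -> ~~ connect (arc_rel L) a z -> a != v -> z != v ->
  component (arc_rel ((v, z) :: (a, v) :: L)) =1
  component (arc_rel ((a, v) :: (a, z) :: L)).
Proof.
move=> iso naz av zv; have se := @arc_rel_sym L.
set C := component (arc_rel L); set K := C a :|: C z :|: [set v].
have nv x : x != v -> ~~ connect (arc_rel L) x v.
  move=> xv; rewrite (sym_connect_sym se).
  by apply: contra xv => /(connect_isolated iso) ->.
have m1 : merges (arc_rel L) (arc_rel ((a, v) :: L)) (C a :|: [set v]).
  by rewrite -(component_isolated iso); exact: merges_cons_arc.
have zM1 : z \notin C a :|: [set v] by rewrite !inE negb_or naz.
have mG : merges (arc_rel L) (arc_rel ((v, z) :: (a, v) :: L)) K.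
  apply: (merges_trans m1); last by rewrite /K setUAC subsetUl.
  have := merges_cons_arc ((a, v) :: L) v z.
  by rewrite !m1 (negbTE zM1) !inE eqxx orbT /K setUAC.
have m2 := merges_cons_arc L a z.
have mG' : merges (arc_rel L) (arc_rel ((a, v) :: (a, z) :: L)) K.
  apply: (merges_trans m2); last exact: subsetUl.
  have := merges_cons_arc ((a, z) :: L) a v.
  rewrite !m2 !inE connect0 /= (negbTE (nv a av)) (negbTE (nv z zv)) /=.
  by rewrite (component_isolated iso).
by move=> x; rewrite mG mG'.
Qed.

Lemma steiner_forest_subdivide L S R a z c v :
  steiner_forest ((a, z) :: L) S R -> c \in S ->
  ~~ connect (arc_rel ((a, z) :: L)) c a -> v \notin S ->
  steiner_forest ((c, v) :: (v, z) :: (a, v) :: L) (v |: S) R.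
Proof.
move=> F cS nca vS; have [ok0 ac0 win0 _] := F.
case/andP: (win0) => /andP[aS zS] win.
(* The bound is inherited from the fork at [c] and [a] on the unsubdivided
   forest, which has the same components. *)
have [_ _ _ bfork] := steiner_forest_fork F cS aS nca vS.
have [ok ac naz] := forest_cut_arc ok0 ac0.
have iso := isolated_arc_rel win vS; have iso0 := isolated_arc_rel win0 vS.
have outside x : x \in S -> x != v by move=> xS; apply: contraNneq vS => <-.
have eqG := component_subdivide iso naz (outside a aS) (outside z zS).
have [ok1 ac1] := forest_add_arc ok ac (not_connect_outside win aS vS).
have nvz : ~~ connect (arc_rel ((a, v) :: L)) v z.
  have : z \notin component (arc_rel ((a, v) :: L)) v.
    rewrite merges_cons_arc (component_isolated iso) !inE eqxx orbT /= !inE.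
    by rewrite negb_or naz outside.
  by rewrite inE.
have [ok2 ac2] := forest_add_arc ok1 ac1 nvz.
have ncv : ~~ connect (arc_rel ((v, z) :: (a, v) :: L)) c v.
  have : v \notin component (arc_rel ((v, z) :: (a, v) :: L)) c.
    rewrite eqG merges_cons_arc (component_isolated iso0) !inE.
    rewrite (sym_connect_sym (@arc_rel_sym _)) (negbTE nca) (negbTE (outside c cS)) inE.
    exact: not_connect_outside win0 cS vS.
  by rewrite inE.
have [ok3 ac3] := forest_add_arc ok2 ac2 ncv.
split=> [//|//||x /bfork /=]; last by rewrite !(eq_component_cons_arc _ _ eqG).
rewrite /arcs_within /= !in_setU1 eqxx cS aS zS !orbT /=.
exact: sub_arcs_within (subsetUr _ _) win.
Qed.

Definition keeps_connected R e e' :=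
  {in R &, forall f g, connect e f g -> connect e' f g}.

Lemma keeps_connected_sub R e e1 e2 :
  keeps_connected R e e1 -> subrel (connect e1) (connect e2) -> keeps_connected R e e2.
Proof. by move=> k sub f g fR gR /(k _ _ fR gR); apply: sub. Qed.

Lemma eq_keeps_connected R e1 e2 e' :
  connect e1 =2 connect e2 -> keeps_connected R e2 e' -> keeps_connected R e1 e'.
Proof. by move=> eq12 k f g fR gR; rewrite eq12; apply: k. Qed.

Lemma connect_add_edge_isolated e u v a b : symmetric e -> isolated e v ->
  a != v -> b != v -> connect (add_edge e u v) a b = connect e a b.
Proof.
move=> se iso av bv; have nv c : c != v -> connect e v c = false.
  by move=> cv; apply/negbTE; apply: contra cv => /(connect_isolated iso) ->.
by rewrite connect_add_edge // (sym_connect_sym se a v) !nv // andbF orbF.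
Qed.

Lemma keeps_connected_add_edge R e e' u v x y :
  symmetric e -> connect_sym e' -> keeps_connected R e e' ->
  connect e u x -> connect e v y -> x \in R -> y \in R -> connect e' x y ->
  keeps_connected R (add_edge e u v) e'.
Proof.
move=> se cs' k ux vy xR yR xy f g fR gR; have cs := sym_connect_sym se.
rewrite connect_add_edge //; case/or3P=> [/k -> //|/andP[fu vg]|/andP[fv ug]].
- apply: connect_trans (k f x fR xR (connect_trans fu ux)) (connect_trans xy _).
  by apply: k => //; apply: connect_trans vg; rewrite cs.
- apply: connect_trans (k f y fR yR (connect_trans fv vy)) (connect_trans _ _).
    by rewrite cs'; exact: xy.
  by apply: k => //; apply: connect_trans ug; rewrite cs.
Qed.

Lemma keeps_connected_add_isolated R e e' u v :
  symmetric e -> isolated e v -> v \notin R ->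
  keeps_connected R e e' -> keeps_connected R (add_edge e u v) e'.
Proof.
move=> se iso vR k f g fR gR.
have nv h : h \in R -> h != v by move=> hR; apply: contraNneq vR => <-.
by rewrite connect_add_edge_isolated ?nv //; apply: k.
Qed.

Lemma keeps_connected_add_leaf R e e' u v x :
  symmetric e -> connect_sym e' -> isolated e v ->
  keeps_connected (R :\ v) e e' -> connect e u x -> x \in R -> x != v ->
  connect e' x v -> keeps_connected R (add_edge e u v) e'.
Proof.
move=> se cs' iso k ux xR xv x'v f g fR gR fg.
(* [v] can be traded for [x], which is linked to it in both graphs. *)
pose rep h := if h == v then x else h.
have repR h : h \in R -> rep h \in R :\ v.
  by rewrite /rep; case: eqP => [_|/eqP hv] hR; rewrite !inE ?xv ?hv.
have rep_add h : connect (add_edge e u v) h (rep h).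
  rewrite /rep; case: eqP => [->|_]; last exact: connect0.
  by rewrite connect_add_edge // connect0 ux !orbT.
have rep_e' h : connect e' (rep h) h.
  by rewrite /rep; case: eqP => [->|_]; [exact: x'v|exact: connect0].
have repv h : h \in R -> rep h != v by move/repR; rewrite !inE => /andP[].
have : connect e (rep f) (rep g).
  rewrite -(connect_add_edge_isolated u se iso) ?repv //.
  apply: connect_trans (connect_trans _ fg) (rep_add g).
  by rewrite (sym_connect_sym (add_edge_sym u v se)).
move/(k _ _ (repR f fR) (repR g gR)) => h.
by apply: connect_trans (connect_trans _ h) (rep_e' g); rewrite cs'.
Qed.

End Forests.

Lemma subseq_insert (T : eqType) (s1 s2 : seq T) v :
  subseq s1 s2 -> v \in s2 -> v \notin s1 ->
  exists s s', s1 = s ++ s' /\ subseq (s ++ v :: s') s2.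
Proof.
elim: s2 s1 => [|y s2 IH] s1 //=.
case: (eqVneq y v) => [->|yv] sub; rewrite inE => vs vs1.
  exists [::], s1; split => //=; rewrite eqxx.
  move: sub vs1; case: s1 => [|z s1] /=; first by rewrite sub0seq.
  rewrite inE negb_or => sub /andP[vz _].
  by rewrite eq_sym (negbTE vz) in sub.
move: vs; rewrite eq_sym (negbTE yv) /= => vs.
case: s1 sub vs1 => [|z s1] sub vs1.
  by exists [::], [::]; split => //=; rewrite eq_sym (negbTE yv) sub1seq.
move: sub vs1; rewrite /= inE negb_or => sub /andP[vz vs1].
case: (eqVneq z y) sub => [<-|zy] sub.
  case: (IH s1 sub vs vs1) => a [b [-> h]].
  by exists (z :: a), b; split => //=; rewrite eqxx.
case: (IH (z :: s1) sub vs); first by rewrite inE negb_or vz.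
move=> a [b [e h]]; exists a, b; split => //.
case: a e h => [|c a] /= e h; first by rewrite eq_sym (negbTE yv).
case: eqP => // _; exact: subseq_trans (subseq_cons _ _) h.
Qed.

Lemma subsetU1_D1 (T : finType) (A B : {set T}) x : A \subset x |: B -> A :\ x \subset B.
Proof.
move/subsetP=> sAB; apply/subsetP => y; rewrite in_setD1 => /andP[yx /sAB].
by rewrite in_setU1 (negbTE yx).
Qed.

Lemma setU1_id (T : finType) (A : {set T}) x : x \in A -> x |: A = A.
Proof. by move=> xA; apply/setUidPr; rewrite sub1set. Qed.

Lemma all2_cat (S T : Type) (r : S -> T -> bool) s1 s2 t1 t2 :
  all2 r s1 t1 -> all2 r s2 t2 -> all2 r (s1 ++ s2) (t1 ++ t2).
Proof. by elim: s1 t1 => [|x s1 IH] [|y t1] //= /andP[-> /IH]. Qed.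

Lemma all2_splitr (S T : eqType) (r : S -> T -> bool) s t y :
  all2 r s t -> y \in t ->
  exists s1 x s2 t1 t2, [/\ s = s1 ++ x :: s2, t = t1 ++ y :: t2,
                            all2 r s1 t1, r x y & all2 r s2 t2].
Proof.
elim: t s => [|y' t IH] [|x' s] //= /andP[rxy' rst]; rewrite inE.
case/predU1P=> [->|yt]; first by exists [::], x', s, [::], t.
have [s1 [x [s2 [t1 [t2 [-> -> r1 rxy r2]]]]]] := IH s rst yt.
by exists (x' :: s1), x, s2, (y' :: t1), t2; rewrite /= rxy' r1.
Qed.

(** * Families of walks *)

Section WalkFamilies.
Variable V : finType.
Local Notation walk := (V * seq V)%type.
Implicit Types (W Ws : seq walk) (R : {set V}) (w : walk) (a : V * V).
Implicit Types (x y z v : V) (s t : seq V).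

Definition steiner_family R W := steiner_forest (sol_arcs W) (sol_verts W) R.

Lemma sol_vertsP W y : reflect (exists2 w, w \in W & y \in wverts w) (y \in sol_verts W).
Proof. by rewrite inE; apply: hasP. Qed.

Lemma mem_sol_verts W w y : w \in W -> y \in wverts w -> y \in sol_verts W.
Proof. by move=> wW yw; apply/sol_vertsP; exists w. Qed.

Lemma perm_sol_verts W1 W2 : perm_eq W1 W2 -> sol_verts W1 = sol_verts W2.
Proof. by move=> pW; apply/setP => y; rewrite !inE (perm_has _ pW). Qed.

Lemma perm_sol_arcs W1 W2 : perm_eq W1 W2 -> perm_eq (sol_arcs W1) (sol_arcs W2).
Proof. by move=> pW; apply/perm_flatten/perm_map. Qed.

Lemma perm_urel W1 W2 : perm_eq W1 W2 -> urel W1 =2 urel W2.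
Proof. by move=> pW; apply/perm_arc_rel/perm_sol_arcs. Qed.

Lemma perm_steiner_family R W1 W2 :
  perm_eq W1 W2 -> steiner_family R W1 -> steiner_family R W2.
Proof.
move=> pW; rewrite /steiner_family (perm_sol_verts pW).
exact/perm_steiner_forest/perm_sol_arcs.
Qed.

Lemma warcs_ends w a : a \in warcs w -> (a.1 \in wverts w) && (a.2 \in wverts w).
Proof.
case: w a => x s [a b]; rewrite /warcs /wverts /=.
elim: s x => [|y s IH] x //=; rewrite inE => /predU1P[[-> ->]|/IH].
  by rewrite !inE !eqxx orbT.
by rewrite !inE => /andP[/orP[->|->] /orP[->|->]]; rewrite ?orbT.
Qed.

Lemma arcs_within_sol W : arcs_within (sol_arcs W) (sol_verts W).
Proof.
apply/allP => a /flatten_mapP[w wW /warcs_ends /andP[a1 a2]].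
by apply/andP; split; apply/sol_vertsP; exists w.
Qed.

Lemma connect_walk W w y : w \in W -> y \in wverts w -> connect (urel W) w.1 y.
Proof.
case: w => x s wW; have : {subset warcs (x, s) <= sol_arcs W}.
  by move=> a aw; apply/flatten_mapP; exists (x, s).
rewrite /wverts /=; elim: s x {wW} => [|z s IH] x sub; rewrite inE.
  by move/eqP->.
case/predU1P=> [->|ys]; first exact: connect0.
have xz : urel W x z by rewrite /urel sub // /warcs mem_head.
apply: connect_trans (connect1 xz) (IH z _ ys) => a aw.
by apply: sub; rewrite /warcs /= inE aw orbT.
Qed.

Lemma in_sol_verts_cons w W y :
  (y \in sol_verts (w :: W)) = (y \in wverts w) || (y \in sol_verts W).
Proof. by rewrite !inE. Qed.

Definition covered W1 W2 :=
  forall w1, w1 \in W1 -> exists2 w2, w2 \in W2 & {subset wverts w1 <= wverts w2}.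

Lemma covered_sol_verts W1 W2 : covered W1 W2 -> sol_verts W1 \subset sol_verts W2.
Proof.
move=> cov; apply/subsetP => y /sol_vertsP[w1 /cov[w2 w2W sw] yw1].
by apply/sol_vertsP; exists w2; last exact: sw.
Qed.

Lemma covered_connect W1 W2 :
  covered W1 W2 -> subrel (connect (urel W1)) (connect (urel W2)).
Proof.
move=> cov; apply: connect_sub.
suff arc x y : (x, y) \in sol_arcs W1 -> connect (urel W2) x y.
  by move=> x y /orP[/arc //|/arc]; rewrite (sym_connect_sym (@arc_rel_sym _ _)).
case/flatten_mapP=> w1 /cov[w2 w2W sw] /warcs_ends /andP[/= hx hy].
apply: connect_trans (connect_walk w2W (sw _ hy)).
by rewrite (sym_connect_sym (@arc_rel_sym _ _)); exact: connect_walk w2W (sw _ hx).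
Qed.

Lemma perm_covered W1 W1' W2 W2' :
  perm_eq W1 W1' -> perm_eq W2 W2' -> covered W1' W2' -> covered W1 W2.
Proof.
move=> p1 p2 cov w1; rewrite (perm_mem p1) => /cov[w2 w2W sw].
by exists w2; rewrite ?(perm_mem p2).
Qed.

Lemma covered_cons w1 w2 W :
  {subset wverts w1 <= wverts w2} -> covered (w1 :: W) (w2 :: W).
Proof.
move=> sw w; rewrite inE => /predU1P[->|wW]; first by exists w2; rewrite ?mem_head.
by exists w; rewrite // inE wW orbT.
Qed.

Lemma covered_cons2 w1 w2 w1' w2' W :
  {subset wverts w1 <= wverts w1'} -> {subset wverts w2 <= wverts w2'} ->
  covered [:: w1, w2 & W] [:: w1', w2' & W].
Proof.
move=> sw1 sw2 w; rewrite !inE => /or3P[/eqP->|/eqP->|wW].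
- by exists w1'; rewrite ?mem_head.
- by exists w2'; rewrite // !inE eqxx orbT.
- by exists w; rewrite // !inE wW !orbT.
Qed.

Lemma wverts_insert x s1 s2 v : {subset wverts (x, s1 ++ s2) <= wverts (x, s1 ++ v :: s2)}.
Proof.
by move=> y; rewrite /wverts !inE !mem_cat inE => /or3P[->|->|->]; rewrite ?orbT.
Qed.

Lemma wverts_rcons x s v : {subset wverts (x, s) <= wverts (x, rcons s v)}.
Proof. by rewrite -!cats1 -[s in wverts (x, s)]cats0; exact: wverts_insert. Qed.

Lemma mem_wverts_insert x s1 s2 v : v \in wverts (x, s1 ++ v :: s2).
Proof. by rewrite /wverts !inE mem_cat inE eqxx !orbT. Qed.

Lemma sol_verts_insert x s1 s2 v W :
  sol_verts ((x, s1 ++ v :: s2) :: W) = v |: sol_verts ((x, s1 ++ s2) :: W).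
Proof.
apply/setP => y; rewrite in_setU1 !in_sol_verts_cons /wverts !inE !mem_cat inE.
by case: (y == v); rewrite ?orbT.
Qed.

Lemma sol_verts_rcons x s v W :
  sol_verts ((x, rcons s v) :: W) = v |: sol_verts ((x, s) :: W).
Proof. by rewrite -cats1 sol_verts_insert cats0. Qed.

Lemma warcs_cat x s1 s2 :
  warcs (x, s1 ++ s2) = zip (belast x s1) s1 ++ warcs (last x s1, s2).
Proof. by rewrite /warcs /= -cat_cons lastI cat_rcons zip_cat // size_belast. Qed.

Lemma warcs_rcons x s v : warcs (x, rcons s v) = rcons (warcs (x, s)) (last x s, v).
Proof. by rewrite /warcs /=; elim: s x => [|y s IH] x //=; rewrite IH. Qed.

Lemma perm_sol_arcs_insert x s1 z s2 v W :
  exists L, perm_eq (sol_arcs ((x, s1 ++ z :: s2) :: W)) ((last x s1, z) :: L) /\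
            perm_eq (sol_arcs ((x, s1 ++ v :: z :: s2) :: W))
                    ((last x s1, v) :: (v, z) :: L).
Proof.
exists (zip (belast x s1) s1 ++ warcs (z, s2) ++ sol_arcs W).
rewrite /sol_arcs /= !warcs_cat -!catA; split; apply/permPl.
  exact: (perm_catCA _ [:: _]).
exact: (perm_catCA _ [:: _; _]).
Qed.

Lemma perm_sol_arcs_rcons x s v W :
  perm_eq ((last x s, v) :: sol_arcs ((x, s) :: W)) (sol_arcs ((x, rcons s v) :: W)).
Proof.
rewrite perm_sym /sol_arcs /= warcs_rcons cat_rcons; apply/permPl.
exact: (perm_catCA _ [:: _]).
Qed.

Lemma connect_urel_rcons x s v W :
  connect (urel ((x, rcons s v) :: W)) =2
  connect (add_edge (urel ((x, s) :: W)) (last x s) v).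
Proof.
apply: eq_connect => a b; rewrite -arc_rel_cons.
exact: esym (perm_arc_rel (perm_sol_arcs_rcons x s v W) a b).
Qed.

Lemma steiner_family_fork R x t y t1 v W :
  steiner_family R ((x, t) :: (y, t1) :: W) ->
  v \notin sol_verts ((x, t) :: (y, t1) :: W) ->
  ~~ connect (urel ((x, t) :: (y, t1) :: W)) (last x t) (last y t1) ->
  steiner_family R ((x, rcons t v) :: (y, rcons t1 v) :: W).
Proof.
move=> F vW nc; rewrite /steiner_family.
have -> : sol_verts ((x, rcons t v) :: (y, rcons t1 v) :: W) =
          v |: sol_verts ((x, t) :: (y, t1) :: W).
  apply/setP => u; rewrite in_setU1 !in_sol_verts_cons /wverts !inE !mem_rcons !inE.
  by case: (u == v); rewrite ?orbT.
have pA : perm_eq ((last x t, v) :: (last y t1, v) :: sol_arcs ((x, t) :: (y, t1) :: W))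
                  (sol_arcs ((x, rcons t v) :: (y, rcons t1 v) :: W)).
  apply/permP => P; rewrite /sol_arcs /= !warcs_rcons -!cats1 !count_cat /=; lia.
apply: perm_steiner_forest pA (steiner_forest_fork F _ _ nc vW).
  exact: mem_sol_verts (mem_head _ _) (mem_last _ _).
by apply: (@mem_sol_verts _ (y, t1)); rewrite ?mem_last // !inE eqxx orbT.
Qed.

Lemma steiner_family_subdivide R x t y t1 z t2 v W :
  steiner_family R ((x, t) :: (y, t1 ++ z :: t2) :: W) ->
  v \notin sol_verts ((x, t) :: (y, t1 ++ z :: t2) :: W) ->
  ~~ connect (urel ((x, t) :: (y, t1 ++ z :: t2) :: W)) (last x t) (last y t1) ->
  steiner_family R ((x, rcons t v) :: (y, t1 ++ v :: z :: t2) :: W).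
Proof.
move=> F vW nc; rewrite /steiner_family.
have -> : sol_verts ((x, rcons t v) :: (y, t1 ++ v :: z :: t2) :: W) =
          v |: sol_verts ((x, t) :: (y, t1 ++ z :: t2) :: W).
  apply/setP => u; rewrite in_setU1 !in_sol_verts_cons /wverts !inE mem_rcons !mem_cat !inE.
  by case: (u == v); rewrite ?orbT.
have [L [/permP pold /permP pnew]] := perm_sol_arcs_insert y t1 z t2 v ((x, t) :: W).
have pold' : perm_eq (sol_arcs ((x, t) :: (y, t1 ++ z :: t2) :: W)) ((last y t1, z) :: L).
  by apply/permP => P; rewrite -pold /sol_arcs /= !count_cat; lia.
have pnew' : perm_eq ((last x t, v) :: (v, z) :: (last y t1, v) :: L)
                     (sol_arcs ((x, rcons t v) :: (y, t1 ++ v :: z :: t2) :: W)).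
  apply/permP => P; move: (pnew P).
  by rewrite /sol_arcs /= warcs_rcons -cats1 !count_cat /=; lia.
apply: perm_steiner_forest pnew' (steiner_forest_subdivide _ _ _ vW).
- exact: perm_steiner_forest pold' F.
- exact: mem_sol_verts (mem_head _ _) (mem_last _ _).
- by rewrite -(eq_connect (perm_arc_rel pold')); exact: nc.
Qed.

Lemma steiner_family_insert R x t y t1 t2 v W :
  steiner_family R ((x, t) :: (y, t1 ++ t2) :: W) ->
  v \notin sol_verts ((x, t) :: (y, t1 ++ t2) :: W) ->
  ~~ connect (urel ((x, t) :: (y, t1 ++ t2) :: W)) (last x t) (last y t1) ->
  steiner_family R ((x, rcons t v) :: (y, t1 ++ v :: t2) :: W).
Proof.
case: t2 => [|z t2]; last exact: steiner_family_subdivide.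
rewrite cats0 => F vW nc; have := steiner_family_fork F vW nc.
by rewrite !cats1.
Qed.

End WalkFamilies.

(** * Pruning a solution *)

Section Pruning.
Variable V : finType.
Local Notation walk := (V * seq V)%type.
Implicit Types (W Ws : seq walk) (R : {set V}) (w : walk).
Implicit Types (x y z v : V) (s t : seq V).

Definition subwalk (w' w : walk) := (w'.1 == w.1) && subseq w'.2 w.2.

Lemma subwalk_verts w' w : subwalk w' w -> {subset wverts w' <= wverts w}.
Proof.
case: w' w => [x' t] [x s] /andP[/= /eqP-> ts] y; rewrite /wverts !inE.
by case/predU1P=> [->|/(mem_subseq ts)->]; rewrite ?eqxx ?orbT.
Qed.

Lemma subwalk_rcons x t s v : subwalk (x, t) (x, s) -> subwalk (x, t) (x, rcons s v).
Proof. by case/andP=> _ ts; rewrite /subwalk eqxx (subseq_trans ts (subseq_rcons s v)). Qed.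

Lemma subwalk_rcons2 x t s v :
  subwalk (x, t) (x, s) -> subwalk (x, rcons t v) (x, rcons s v).
Proof. by case/andP=> _ ts; rewrite /subwalk eqxx -!cats1 cat_subseq. Qed.

Lemma all2_subwalk_mem Ws W w' :
  all2 subwalk Ws W -> w' \in Ws -> exists2 w, w \in W & subwalk w' w.
Proof.
elim: Ws W => [|w1 Ws IH] [|w W] //= /andP[sw /IH{}IH].
rewrite inE => /predU1P[->|/IH[w2 w2W sw2]]; first by exists w; rewrite ?mem_head.
by exists w2; rewrite // inE w2W orbT.
Qed.

Lemma all2_subwalk_splitr Ws W y sk :
  all2 subwalk Ws W -> (y, sk) \in W ->
  exists (Ws1 Ws2 W1 W2 : seq walk) (tk : seq V),
    [/\ Ws = Ws1 ++ (y, tk) :: Ws2, W = W1 ++ (y, sk) :: W2,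
        all2 subwalk Ws1 W1, subseq tk sk & all2 subwalk Ws2 W2].
Proof.
move=> sW /(all2_splitr sW)[Ws1 [[y' tk] [Ws2 [W1 [W2 [-> -> s1 swk s2]]]]]].
case/andP: swk => /eqP/= -> tksk.
by exists Ws1, Ws2, W1, W2, tk.
Qed.

Lemma all2_subwalk_starts Ws W : all2 subwalk Ws W -> map fst Ws = map fst W.
Proof. by elim: Ws W => [|w' Ws IH] [|w W] //= /andP[/andP[/eqP-> _] /IH->]. Qed.

Lemma all2_subwalk_covered Ws W : all2 subwalk Ws W -> covered Ws W.
Proof.
by move=> sW w' /(all2_subwalk_mem sW)[w wW /subwalk_verts]; exists w.
Qed.

Definition pruned R W Ws :=
  [/\ all2 subwalk Ws W, steiner_family R Ws, R \subset sol_verts Ws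
    & keeps_connected R (urel W) (urel Ws)].

Lemma connect_pruned_vertex R W Ws v y :
  {in W, forall w, w.1 \in R} -> all2 subwalk Ws W ->
  keeps_connected R (urel W) (urel Ws) ->
  v \in sol_verts Ws -> y \in R -> connect (urel W) v y -> connect (urel Ws) v y.
Proof.
move=> st sW k /sol_vertsP[w' w'Ws vw'] yR vy.
have [w wW sw] := all2_subwalk_mem sW w'Ws.
have e1 : w'.1 = w.1 by case/andP: sw => /eqP.
apply: (@connect_trans _ _ w'.1).
  by rewrite (sym_connect_sym (@arc_rel_sym _ _)); exact: connect_walk w'Ws vw'.
apply: k; rewrite ?e1 ?st //.
exact: connect_trans (connect_walk wW (subwalk_verts sw vw')) vy.
Qed.

Lemma keeps_connected_rcons R x s v W Ws Ws' y :
  keeps_connected R (urel ((x, s) :: W)) (urel Ws) ->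
  subrel (connect (urel Ws)) (connect (urel Ws')) ->
  x \in R -> y \in R -> connect (urel ((x, s) :: W)) v y -> connect (urel Ws') x y ->
  keeps_connected R (urel ((x, rcons s v) :: W)) (urel Ws').
Proof.
move=> k sub xR yR vy xy; apply: eq_keeps_connected (connect_urel_rcons x s v W) _.
apply: keeps_connected_add_edge (keeps_connected_sub k sub) _ vy xR yR xy.
- exact: arc_rel_sym.
- exact: sym_connect_sym (@arc_rel_sym _ _).
rewrite (sym_connect_sym (@arc_rel_sym _ _)).
exact: connect_walk (mem_head _ _) (mem_last _ _).
Qed.

Lemma pruned_rcons_fresh R x s t v W Ws :
  v \notin sol_verts ((x, s) :: W) -> v \notin R ->
  pruned R ((x, s) :: W) ((x, t) :: Ws) -> pruned R ((x, rcons s v) :: W) ((x, t) :: Ws).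
Proof.
move=> vW vR [/= /andP[sw sWs] F sR k]; split=> //; first by rewrite /= subwalk_rcons.
apply: eq_keeps_connected (connect_urel_rcons x s v W) _.
exact: keeps_connected_add_isolated (@arc_rel_sym _ _)
  (isolated_arc_rel (arcs_within_sol _) vW) vR k.
Qed.

Lemma pruned_rcons_leaf R x s t v W Ws :
  x \in R -> v \notin sol_verts ((x, s) :: W) -> v \in R ->
  pruned (R :\ v) ((x, s) :: W) ((x, t) :: Ws) ->
  pruned R ((x, rcons s v) :: W) ((x, rcons t v) :: Ws).
Proof.
move=> xR vW vR [sW F sR k].
have vWs : v \notin sol_verts ((x, t) :: Ws).
  by apply: contra vW; apply/subsetP/covered_sol_verts/all2_subwalk_covered.
have xv : x != v.
  by apply: contraNneq vW => <-; apply: mem_sol_verts (mem_head _ _) (mem_head _ _).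
have tWs : last x t \in sol_verts ((x, t) :: Ws).
  exact: mem_sol_verts (mem_head _ _) (mem_last _ _).
split.
- by move: sW => /= /andP[/subwalk_rcons2 -> ->].
- rewrite /steiner_family sol_verts_rcons -(setD1K vR).
  apply: perm_steiner_forest (perm_sol_arcs_rcons _ _ _ _) _.
  apply: steiner_forest_link (steiner_forest_isolated F vWs) _ (setU11 _ _) _.
    by rewrite in_setU1 tWs orbT.
  exact: not_connect_outside (arcs_within_sol _) tWs vWs.
- by rewrite sol_verts_rcons -(setD1K vR) setUS.
apply: eq_keeps_connected (connect_urel_rcons x s v W) _.
apply: keeps_connected_add_leaf xR xv _.
- exact: arc_rel_sym.
- exact: sym_connect_sym (@arc_rel_sym _ _).
- exact: isolated_arc_rel (arcs_within_sol _) vW.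
- exact/(keeps_connected_sub k)/covered_connect/covered_cons/wverts_rcons.
- rewrite (sym_connect_sym (@arc_rel_sym _ _)).
  exact: connect_walk (mem_head _ _) (mem_last _ _).
- by apply: connect_walk (mem_head _ _) _; rewrite -cats1 mem_wverts_insert.
Qed.

Lemma pruned_rcons_linked R x s t v W Ws y :
  x \in R -> y \in R -> connect (urel ((x, s) :: W)) v y ->
  connect (urel ((x, t) :: Ws)) x y ->
  pruned R ((x, s) :: W) ((x, t) :: Ws) -> pruned R ((x, rcons s v) :: W) ((x, t) :: Ws).
Proof.
move=> xR yR vy xy [/= /andP[sw sWs] F sR k]; split=> //; first by rewrite /= subwalk_rcons.
exact: keeps_connected_rcons k (fun _ _ h => h) xR yR vy xy.
Qed.

Lemma pruned_rcons_link R x s t v W Ws y :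
  {in (x, s) :: W, forall w, w.1 \in R} -> y \in R ->
  connect (urel ((x, s) :: W)) v y ->
  v \in sol_verts ((x, t) :: Ws) -> ~~ connect (urel ((x, t) :: Ws)) x y ->
  pruned R ((x, s) :: W) ((x, t) :: Ws) ->
  pruned R ((x, rcons s v) :: W) ((x, rcons t v) :: Ws).
Proof.
move=> st yR vy vWs nxy [sW F sR k].
have xR : x \in R := st _ (mem_head _ _).
have vy' := connect_pruned_vertex st sW k vWs yR vy.
have sub := covered_connect (covered_cons (W := Ws) (@wverts_rcons _ x t v)).
have eV := setU1_id vWs.
split.
- by move: sW => /= /andP[/subwalk_rcons2 -> ->].
- rewrite /steiner_family sol_verts_rcons eV.
  apply: perm_steiner_forest (perm_sol_arcs_rcons _ _ _ _) (steiner_forest_link F _ vWs _).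
    exact: mem_sol_verts (mem_head _ _) (mem_last _ _).
  apply: contra nxy => tv; apply: connect_trans (connect_trans tv vy').
  exact: connect_walk (mem_head _ _) (mem_last _ _).
- by rewrite sol_verts_rcons eV.
apply: (keeps_connected_rcons k sub xR yR vy).
apply: connect_trans (sub _ _ vy').
by apply: connect_walk (mem_head _ _) _; rewrite -cats1 mem_wverts_insert.
Qed.

(* [v] lies on the walk of [y], which is not yet joined to [x], but is absent
   from the pruned family: it becomes a Steiner vertex, appended to the pruned
   walk of [x] and inserted into that of [y]. *)
Lemma pruned_rcons_branch R x s t v W Ws y sk :
  {in (x, s) :: W, forall w, w.1 \in R} -> (y, sk) \in W -> v \in wverts (y, sk) ->
  v \notin sol_verts ((x, t) :: Ws) -> ~~ connect (urel ((x, t) :: Ws)) x y ->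
  pruned R ((x, s) :: W) ((x, t) :: Ws) -> exists Ws', pruned R ((x, rcons s v) :: W) Ws'.
Proof.
move=> st wW vw vWs nxy [/= /andP[sw sWs] F sR k].
have xR : x \in R := st _ (mem_head _ _).
have yR : y \in R by apply: (st (y, sk)); rewrite inE wW orbT.
have vy : connect (urel ((x, s) :: W)) v y.
  rewrite (sym_connect_sym (@arc_rel_sym _ _)).
  by apply: (connect_walk (w := (y, sk))); rewrite // inE wW orbT.
have [Ws1 [Ws2 [W1 [W2 [tk [eWs eW s1 tksk s2]]]]]] := all2_subwalk_splitr sWs wW.
subst Ws W; set Rest := Ws1 ++ Ws2.
have vtk : v \notin tk.
  apply: contra vWs => vtk; apply: (@mem_sol_verts _ _ (y, tk)).
    by rewrite !inE mem_cat inE eqxx !orbT.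
  by rewrite /wverts inE vtk orbT.
have vsk : v \in sk.
  move: vw; rewrite /wverts inE; case: eqP => [vy'|//]; subst v.
  by move: vWs; rewrite (subsetP sR).
have [t1 [t2 [etk st12]]] := subseq_insert tksk vsk vtk; subst tk.
have pOld :
    perm_eq ((x, t) :: Ws1 ++ (y, t1 ++ t2) :: Ws2) ((x, t) :: (y, t1 ++ t2) :: Rest).
  by rewrite perm_cons; apply/permPl; exact: (perm_catCA Ws1 [:: _] Ws2).
set Ws' := (x, rcons t v) :: Ws1 ++ (y, t1 ++ v :: t2) :: Ws2.
have pNew : perm_eq Ws' ((x, rcons t v) :: (y, t1 ++ v :: t2) :: Rest).
  by rewrite perm_cons; apply/permPl; exact: (perm_catCA Ws1 [:: _] Ws2).
have cov : covered ((x, t) :: Ws1 ++ (y, t1 ++ t2) :: Ws2) Ws'.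
  apply: perm_covered pOld pNew _.
  exact: covered_cons2 (@wverts_rcons _ x t v) (@wverts_insert _ y t1 t2 v).
have nc : ~~ connect (urel ((x, t) :: (y, t1 ++ t2) :: Rest)) (last x t) (last y t1).
  apply: contra nxy => c; rewrite (eq_connect (perm_urel pOld)).
  apply: connect_trans (connect_trans _ c) _.
    exact: connect_walk (mem_head _ _) (mem_last _ _).
  rewrite (sym_connect_sym (@arc_rel_sym _ _)).
  apply: (connect_walk (w := (y, t1 ++ t2))); first by rewrite !inE eqxx orbT.
  by rewrite /wverts -cat_cons mem_cat mem_last.
exists Ws'; split.
- apply/andP; split; first exact: subwalk_rcons2.
  by apply: all2_cat s1 _; rewrite /= s2 andbT /subwalk eqxx st12.
- apply: (@perm_steiner_family _ _ ((x, rcons t v) :: (y, t1 ++ v :: t2) :: Rest)).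
    by rewrite perm_sym.
  apply: steiner_family_insert nc; first exact: perm_steiner_family pOld F.
  by rewrite -(perm_sol_verts pOld).
- exact: subset_trans sR (covered_sol_verts cov).
apply: (keeps_connected_rcons k (covered_connect cov) xR yR vy).
apply: (@connect_trans _ _ v).
  by apply: connect_walk (mem_head _ _) _; rewrite -cats1 mem_wverts_insert.
rewrite (sym_connect_sym (@arc_rel_sym _ _)).
apply: (connect_walk (w := (y, t1 ++ v :: t2))) (mem_wverts_insert _ _ _ _).
by rewrite !inE mem_cat inE eqxx !orbT.
Qed.

Lemma starts_setD1 R W v :
  {in W, forall w, w.1 \in R} -> v \notin sol_verts W -> {in W, forall w, w.1 \in R :\ v}.
Proof.
move=> st vW w wW; rewrite in_setD1 st // andbT; apply: contraNneq vW => <-.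
exact: mem_sol_verts wW (mem_head _ _).
Qed.

Lemma sol_verts_cons_nil x W : sol_verts ((x, [::]) :: W) = x |: sol_verts W.
Proof. by apply/setP => y; rewrite in_sol_verts_cons in_setU1 /wverts inE. Qed.

Lemma pruned_nil R : R \subset sol_verts [::] -> pruned R [::] [::].
Proof.
move=> sR; split=> //; rewrite /steiner_family.
have -> : sol_verts [::] = set0 :> {set V} by apply/setP => y; rewrite !inE.
exact: steiner_forest_nil.
Qed.

Lemma pruned_cons_nil R x W Ws :
  x \in R -> pruned R W Ws -> pruned R ((x, [::]) :: W) ((x, [::]) :: Ws).
Proof.
move=> xR [sW F sR k].
have eV : sol_verts ((x, [::]) :: Ws) = sol_verts Ws.
  by rewrite sol_verts_cons_nil setU1_id // (subsetP sR).
split.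
- by rewrite /= /subwalk eqxx.
- by rewrite /steiner_family eV.
- by rewrite eV.
- exact: k.
Qed.

Lemma pruned_cons_nil_fresh R x W Ws :
  x \in R -> x \notin sol_verts W -> pruned (R :\ x) W Ws ->
  pruned R ((x, [::]) :: W) ((x, [::]) :: Ws).
Proof.
move=> xR xW [sW F sR k].
have xWs : x \notin sol_verts Ws.
  by apply: contra xW; apply/subsetP/covered_sol_verts/all2_subwalk_covered.
split.
- by rewrite /= /subwalk eqxx.
- rewrite /steiner_family sol_verts_cons_nil -(setD1K xR).
  exact: steiner_forest_isolated.
- by rewrite sol_verts_cons_nil -(setD1K xR) setUS.
move=> f g fR gR; rewrite -/(connect (urel W) f g) -/(connect (urel Ws) f g).
have iso := isolated_arc_rel (arcs_within_sol W) xW.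
have cs := sym_connect_sym (@arc_rel_sym _ (sol_arcs W)).
case: (eqVneq f x) => [-> /(connect_isolated iso) -> |fx]; first exact: connect0.
case: (eqVneq g x) => [-> |gx]; last by apply: k; rewrite !inE ?fx ?gx.
by rewrite cs => /(connect_isolated iso) ->; exact: connect0.
Qed.

Lemma pruned_head R x s W Ws :
  pruned R ((x, s) :: W) Ws -> exists t Ws', Ws = (x, t) :: Ws'.
Proof.
case=> sW _ _ _; case: Ws sW => [//|[x' t] Ws] /andP[/andP[/eqP /= ex _] _].
by exists t, Ws; rewrite ex.
Qed.

Lemma exists_pruned_rcons R x s v W :
  {in (x, rcons s v) :: W, forall w, w.1 \in R} ->
  R \subset sol_verts ((x, rcons s v) :: W) ->
  (forall R', {in (x, s) :: W, forall w, w.1 \in R'} ->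
     R' \subset sol_verts ((x, s) :: W) -> exists Ws, pruned R' ((x, s) :: W) Ws) ->
  exists Ws, pruned R ((x, rcons s v) :: W) Ws.
Proof.
move=> st sR IH; rewrite sol_verts_rcons in sR.
have st' : {in (x, s) :: W, forall w, w.1 \in R}.
  move=> w; rewrite inE => /predU1P[->|wW]; first exact: st (mem_head _ _).
  by apply: st; rewrite inE wW orbT.
have xR : x \in R := st' _ (mem_head _ _).
have {}IH R' : {in (x, s) :: W, forall w, w.1 \in R'} ->
    R' \subset sol_verts ((x, s) :: W) ->
    exists t Ws, pruned R' ((x, s) :: W) ((x, t) :: Ws).
  move=> st1 /(IH _ st1)[Ws0 pr]; have [t [Ws eWs]] := pruned_head pr.
  by exists t, Ws; rewrite -eWs.
case: (boolP (v \in sol_verts ((x, s) :: W))) => vW; last first.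
  case: (boolP (v \in R)) => vR.
    have [t [Ws pr]] := IH _ (starts_setD1 st' vW) (subsetU1_D1 sR).
    by exists ((x, rcons t v) :: Ws); exact: pruned_rcons_leaf pr.
  have sR' : R \subset sol_verts ((x, s) :: W).
    apply/subsetP => y yR; move/subsetP: sR => /(_ y yR); rewrite in_setU1.
    by case: eqP => [yv|//]; rewrite -yv yR in vR.
  have [t [Ws pr]] := IH _ st' sR'.
  by exists ((x, t) :: Ws); exact: pruned_rcons_fresh pr.
have [t [Ws pr]] : exists t Ws, pruned R ((x, s) :: W) ((x, t) :: Ws).
  by apply: IH st' _; rewrite -(setU1_id vW).
have [[y sk] wW vw] := sol_vertsP _ _ vW.
have yR : y \in R := st' _ wW.
have vy : connect (urel ((x, s) :: W)) v y.
  by rewrite (sym_connect_sym (@arc_rel_sym _ _)); exact: connect_walk wW vw.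
case: (boolP (connect (urel ((x, t) :: Ws)) x y)) => xy.
  by exists ((x, t) :: Ws); exact: pruned_rcons_linked xR yR vy xy pr.
case: (boolP (v \in sol_verts ((x, t) :: Ws))) => vWs.
  by exists ((x, rcons t v) :: Ws); exact: pruned_rcons_link st' yR vy vWs xy pr.
have {}wW : (y, sk) \in W.
  by move: wW xy; rewrite inE => /predU1P[[-> _]|//]; rewrite connect0.
exact: pruned_rcons_branch st' wW vw vWs xy pr.
Qed.

Lemma exists_pruned R W :
  {in W, forall w, w.1 \in R} -> R \subset sol_verts W -> exists Ws, pruned R W Ws.
Proof.
elim: W R => [|[x s] W IHW] R st sR; first by exists [::]; exact: pruned_nil.
elim/last_ind: s R st sR => [|s v IHs] R st sR; last exact: exists_pruned_rcons.
have xR : x \in R := st _ (mem_head _ _).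
have st' : {in W, forall w, w.1 \in R} by move=> w wW; apply: st; rewrite inE wW orbT.
rewrite sol_verts_cons_nil in sR.
case: (boolP (x \in sol_verts W)) => xW.
  have [Ws pr] : exists Ws, pruned R W Ws by apply: IHW st' _; rewrite -(setU1_id xW).
  by exists ((x, [::]) :: Ws); exact: pruned_cons_nil.
have [Ws pr] := IHW _ (starts_setD1 st' xW) (subsetU1_D1 sR).
by exists ((x, [::]) :: Ws); exact: pruned_cons_nil_fresh.
Qed.

End Pruning.

(** * Walks of the transitive closure *)

Section TransitiveClosure.
Variables (V : finType) (A : rel V).

Lemma subwalk_tc x s t :
  path A x s -> subseq t s -> (forall a, a \in warcs (x, t) -> a.1 != a.2) ->
  path (tc A) x t.
Proof.
move=> ps ts loopfree.
have : path (connect A) x t.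
  apply: (@subseq_sorted _ _ (@connect_trans _ A) (x :: t) (x :: s)).
    by rewrite /= eqxx.
  by apply: sub_path ps => a b; exact: connect1.
elim: t x {ps ts} loopfree => [|y t IH] x //= loopfree /andP[xy pt].
rewrite /tc (loopfree (x, y)) ?mem_head //= xy IH // => a ta.
by apply: loopfree; rewrite /warcs /= inE ta orbT.
Qed.

Lemma tc_walk_expand x t :
  path (tc A) x t -> exists2 s, path A x s & {subset x :: t <= x :: s}.
Proof.
elim: t x => [|y t IH] x /=; first by exists [::].
case/andP => /andP[_ /connectP[p pp ep]] /IH[s' ps' sub'].
exists (p ++ s'); first by rewrite cat_path pp -ep ps'.
move=> z; rewrite inE => /predU1P[->|]; first exact: mem_head.
move/sub'; rewrite inE => /predU1P[->|zs'].
  by rewrite ep -cat_cons mem_cat mem_last.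
by rewrite inE mem_cat zs' !orbT.
Qed.

Lemma tc_family_expand (Ws : seq (V * seq V)) :
  all (walk_ok (tc A)) Ws ->
  exists W, [/\ map fst W = map fst Ws, all (walk_ok A) W & covered Ws W].
Proof.
elim: Ws => [|[x t] Ws IH] /=; first by exists [::].
case/andP => /tc_walk_expand[s ps sub] /IH[W [eW okW cov]].
exists ((x, s) :: W); split; first by rewrite /= eW.
  by rewrite /= okW andbT.
move=> w; rewrite inE => /predU1P[->|/cov[w' w'W sw]].
  by exists (x, s); rewrite ?mem_head.
by exists w'; rewrite // inE w'W orbT.
Qed.

End TransitiveClosure.

(** * Solutions of the All-ST problem *)

Section SnowTeamSolutions.
Variables (V : finType) (A : rel V) (F : V -> bool) (B : V -> nat).

Lemma restricted_starts W :
  (forall v, 0 < B v -> F v) -> is_solution A F B W ->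
  {in W, forall w, w.1 \in [set v | F v]}.
Proof.
move=> restr [_ cnt _] w wW; rewrite inE; apply: restr.
by rewrite -cnt -has_count; apply/hasP; exists w.
Qed.

Lemma facilities_in_solution W :
  is_solution A F B W -> [set v | F v] \subset sol_verts W.
Proof. by case=> _ _ fc; apply/subsetP => f; rewrite inE => Ff; case: (fc f f Ff Ff). Qed.

Lemma pruned_tree_like W Ws :
  is_solution A F B W -> pruned [set v | F v] W Ws -> tree_like (tc A) F B Ws.
Proof.
move=> [okW cnt fc] [sW [simple ac _ _] sR k].
have fcs : facilities_connected F Ws.
  move=> f g Ff Fg; split; first by apply: (subsetP sR); rewrite inE.
  by apply: k; rewrite ?inE //; case: (fc f g Ff Fg).
split=> //; split=> //.
- apply/allP => -[x' t] w'Ws.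
  have [[x s] wW /andP[/eqP/= ex ts]] := all2_subwalk_mem sW w'Ws.
  subst x'; apply: subwalk_tc (allP okW _ wW) ts _ => a aw.
  by apply: simple_arcs_irrefl simple _; apply/flatten_mapP; exists (x, t).
- move=> v; rewrite -cnt; have := congr1 (count (pred1 v)) (all2_subwalk_starts sW).
  by rewrite !count_map.
Qed.

Lemma pruned_card W Ws :
  is_solution A F B W -> (exists v, F v) -> {in W, forall w, w.1 \in [set v | F v]} ->
  pruned [set v | F v] W Ws -> #|sol_verts Ws| <= 2 * #|[set v | F v]| - 1.
Proof.
move=> [_ _ fc] [f0 Ff0] st [sW [_ _ _ b] sR k].
have f0S : f0 \in sol_verts Ws by apply: (subsetP sR); rewrite inE.
suff : #|sol_verts Ws| < 2 * #|[set v | F v]| by lia.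
apply: component_bound_card b f0S _; apply/subsetP => y /sol_vertsP[w' w'Ws yw'].
have [w wW sw] := all2_subwalk_mem sW w'Ws.
have e1 : w'.1 = w.1 by case/andP: sw => /eqP.
rewrite inE; apply: connect_trans (connect_walk w'Ws yw').
have Fw : F w.1 by move: (st w wW); rewrite inE.
by rewrite e1; apply: k; rewrite ?inE //; case: (fc f0 w.1 Ff0 Fw).
Qed.

Lemma tc_solution_expand Ws :
  is_solution (tc A) F B Ws -> exists W, is_solution A F B W.
Proof.
case=> okWs cnt fc; have [W [eW okW cov]] := tc_family_expand okWs.
exists W; split=> //.
- move=> v; rewrite -cnt; have := congr1 (count (pred1 v)) eW.
  by rewrite !count_map.
- move=> f g Ff Fg; have [fS cfg] := fc f g Ff Fg; split.
    exact: subsetP (covered_sol_verts cov) f fS.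
  exact: covered_connect cov _ _ cfg.
Qed.

End SnowTeamSolutions.

Theorem lemma2 (V : finType) (A : rel V) (F : V -> bool) (B : V -> nat)
    (Hconn : uconnected A)
    (Hrestr : forall v, 0 < B v -> F v)
    (HF : exists v, F v) :
  (exists W, is_solution A F B W) <->
  (exists W, tree_like (tc A) F B W /\
             #|sol_verts W| <= 2 * #|[set v | F v]| - 1).
Proof.
split=> [[W solW]|[Ws [[solWs _ _ _] _]]]; last exact: tc_solution_expand solWs.
have st := restricted_starts Hrestr solW.
have [Ws pr] := exists_pruned st (facilities_in_solution solW).
by exists Ws; split; [exact: pruned_tree_like solW pr | exact: pruned_card solW HF st pr].
Qed.
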